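(* The category of $\mathcal{D}$-coalgebras of the comonad $(\mathcal{D},\delta,\varepsilon)$ on $\mathsf{CLAC}$ is equivalent to the category of Cartesian differential categories and strict Cartesian differential functors between them. Explicitly: a Cartesian differential category $\mathbb{X}$ with combinator $\mathsf{D}$ corresponds to the coalgebra $(\mathbb{X},\omega^{\mathsf{D}})$ with $\omega^{\mathsf{D}}(f)_0=f$ and $\omega^{\mathsf{D}}(f)_n=\mathsf{D}^n[f]$, and a coalgebra $(\mathbb{X},\omega)$ corresponds to the Cartesian differential category with combinator $\mathsf{D}^\omega[f]=\omega(f)_1$; these assignments are mutually inverse, and coalgebra morphisms are exactly strict Cartesian differential functors.
   Context: Composition is written in diagrammatic order: $fg$ means first $f$ then $g$. A left additive category is a category whose hom-sets are commutative monoids (with $+$, $0$) such that $f(g+h)=fg+fh$ and $f0=0$; a map $h$ is additive if $(f+g)h=fh+gh$ and $0h=0$. A Cartesian left additive category is a left additive category with finite products in which all projections are additive. $\mathsf{CLAC}$ is the category of Cartesian left additive categories and functors preserving finite products strictly ($\mathsf{F}(A\times B)=\mathsf{F}A\times\mathsf{F}B$, terminal object preserved, $\mathsf{F}(\pi_j)=\pi_j$) and preserving $+$ and $0$ (strict Cartesian left additive functors). A Cartesian differential category is a Cartesian left additive category with a combinator $\mathsf{D}$ sending $f:A\to B$ to $\mathsf{D}[f]:A\times A\to B$ such that: [CD.1] $\mathsf{D}[f+g]=\mathsf{D}[f]+\mathsf{D}[g]$, $\mathsf{D}[0]=0$; [CD.2] $(1\times(\pi_0+\pi_1))\mathsf{D}[f]=(1\times\pi_0)\mathsf{D}[f]+(1\times\pi_1)\mathsf{D}[f]$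 (with $1\times(\pi_0+\pi_1),1\times\pi_j:A\times(A\times A)\to A\times A$) and $\langle 1,0\rangle\mathsf{D}[f]=0$; [CD.3] $\mathsf{D}[1]=\pi_1$, $\mathsf{D}[\pi_j]=\pi_1\pi_j$; [CD.4] $\mathsf{D}[\langle f,g\rangle]=\langle\mathsf{D}[f],\mathsf{D}[g]\rangle$; [CD.5] $\mathsf{D}[fg]=\langle\pi_0f,\mathsf{D}[f]\rangle\mathsf{D}[g]$; [CD.6] $\ell\,\mathsf{D}[\mathsf{D}[f]]=\mathsf{D}[f]$ where $\ell=\langle1,0\rangle\times\langle0,1\rangle:A\times A\to(A\times A)\times(A\times A)$; [CD.7] $c\,\mathsf{D}[\mathsf{D}[f]]=\mathsf{D}[\mathsf{D}[f]]$ where $c=\langle\langle\pi_0\pi_0,\pi_1\pi_0\rangle,\langle\pi_0\pi_1,\pi_1\pi_1\rangle\rangle$ on $(A\times A)\times(A\times A)$ swaps the two middle components. A strict Cartesian differential functor is a strict Cartesian left additive functor with $\mathsf{F}(\mathsf{D}[f])=\mathsf{D}[\mathsf{F}(f)]$. Pre-$\mathsf{D}$-sequences: in a category $\mathbb{X}$ with finite products put $\mathsf{P}(A)=A\times A$, $\mathsf{P}(f)=f\times f$. A pre-$\mathsf{D}$-sequence $f_\bullet:A\to B$ is a sequence $(f_0,f_1,\dots)$ with $f_n:\mathsf{P}^n(A)\to B$. For $h:A'\to A$, $k:B\to C$: $(h\cdot f_\bullet)_n=\mathsf{P}^n(h)f_n$, $(f_\bullet\cdot k)_n=f_nk$. Tangent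 $\mathsf{T}(f_\bullet):\mathsf{P}(A)\to\mathsf{P}(B)$, $\mathsf{T}(f_\bullet)_n=\langle\mathsf{P}^n(\pi_0)f_n,f_{n+1}\rangle$; differential $\mathsf{D}[f_\bullet]:\mathsf{P}(A)\to B$, $\mathsf{D}[f_\bullet]_n=f_{n+1}$. Identity $i_\bullet$: $i_0=1$, $i_n=\pi_1\cdots\pi_1$ ($n$ times). Composition $(f_\bullet\ast g_\bullet)_n=\mathsf{T}^n(f_\bullet)_0\,g_n$. Products: projections $i_\bullet\cdot\pi_j$, pairing $\langle f_\bullet,g_\bullet\rangle_n=\langle f_n,g_n\rangle$; additive structure pointwise ($0_n=0$, $(f_\bullet+g_\bullet)_n=f_n+g_n$). A $\mathsf{D}$-sequence (in a Cartesian left additive category) is a pre-$\mathsf{D}$-sequence with, for all $n$: [DS.1] $\langle1,0\rangle\cdot\mathsf{D}^{n+1}[f_\bullet]=0_\bullet$; [DS.2] $(1\times(\pi_0+\pi_1))\cdot\mathsf{D}^{n+1}[f_\bullet]=((1\times\pi_0)\cdot\mathsf{D}^{n+1}[f_\bullet])+((1\times\pi_1)\cdot\mathsf{D}^{n+1}[f_\bullet])$; [DS.3] $\ell\cdot\mathsf{D}^{n+2}[f_\bullet]=\mathsf{D}^{n+1}[f_\bullet]$; [DS.4] $c\cdot\mathsf{D}^{n+2}[f_\bullet]=\mathsf{D}^{n+2}[f_\bullet]$ (with $\langle1,0\rangle,1\times\pi_j,\ell,c$ the maps above for the object $\mathsf{P}^n(A)$). $\mathcal{D}[\mathbb{X}]$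 is the category of objects of $\mathbb{X}$ and $\mathsf{D}$-sequences, with identity $i_\bullet$, composition $\ast$, and the products and addition above. The comonad: $\mathcal{D}[\mathsf{F}](f_\bullet)_n=\mathsf{F}(f_n)$; $\varepsilon:\mathcal{D}[\mathbb{X}]\to\mathbb{X}$ is the identity on objects and $f_\bullet\mapsto f_0$; $\delta:\mathcal{D}[\mathbb{X}]\to\mathcal{D}[\mathcal{D}[\mathbb{X}]]$ is the identity on objects and sends $f_\bullet$ to the sequence with $0$-th term $f_\bullet$ and $n$-th term $\mathsf{D}^n[f_\bullet]$. A $\mathcal{D}$-coalgebra is $(\mathbb{X},\omega)$ with $\omega:\mathbb{X}\to\mathcal{D}[\mathbb{X}]$ a strict Cartesian left additive functor with $\omega\varepsilon=1$ and $\omega\delta=\omega\,\mathcal{D}[\omega]$; a morphism $(\mathbb{X},\omega)\to(\mathbb{Y},\omega')$ is a strict Cartesian left additive functor $\mathsf{F}$ with $\mathsf{F}\omega'=\omega\,\mathcal{D}[\mathsf{F}]$. *)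

(* Categories are formalized single-sorted: one type of objects, one type of
   morphisms with dom/cod; composition, pairing and addition are total
   operations whose axioms only constrain well-typed arguments.
   Composition is in diagrammatic order: [comp f g] = "first f then g". *)
From Stdlib Require Import Arith.

Record clac : Type := Clac {
  ob : Type;
  mor : Type;
  dom : mor -> ob;
  cod : mor -> ob;
  idm : ob -> mor;
  comp : mor -> mor -> mor;
  prod : ob -> ob -> ob;
  term : ob;
  pi0 : ob -> ob -> mor;
  pi1 : ob -> ob -> mor;
  pair : mor -> mor -> mor;
  bang : ob -> mor;
  add : mor -> mor -> mor;
  zero : ob -> ob -> mor;
  dom_idm : forall A, dom (idm A) = A;
  cod_idm : forall A, cod (idm A) = A;
  dom_comp : forall f g, cod f = dom g -> dom (comp f g) = dom f;
  cod_comp : forall f g, cod f = dom g -> cod (comp f g) = cod g;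
  comp_idl : forall f, comp (idm (dom f)) f = f;
  comp_idr : forall f, comp f (idm (cod f)) = f;
  comp_assoc : forall f g h, cod f = dom g -> cod g = dom h ->
    comp (comp f g) h = comp f (comp g h);
  dom_pi0 : forall A B, dom (pi0 A B) = prod A B;
  cod_pi0 : forall A B, cod (pi0 A B) = A;
  dom_pi1 : forall A B, dom (pi1 A B) = prod A B;
  cod_pi1 : forall A B, cod (pi1 A B) = B;
  dom_pair : forall f g, dom f = dom g -> dom (pair f g) = dom f;
  cod_pair : forall f g, dom f = dom g -> cod (pair f g) = prod (cod f) (cod g);
  pair_pi0 : forall f g, dom f = dom g -> comp (pair f g) (pi0 (cod f) (cod g)) = f;
  pair_pi1 : forall f g, dom f = dom g -> comp (pair f g) (pi1 (cod f) (cod g)) = g;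
  pair_eta : forall h A B, cod h = prod A B ->
    pair (comp h (pi0 A B)) (comp h (pi1 A B)) = h;
  dom_bang : forall A, dom (bang A) = A;
  cod_bang : forall A, cod (bang A) = term;
  bang_uniq : forall h, cod h = term -> h = bang (dom h);
  dom_zero : forall A B, dom (zero A B) = A;
  cod_zero : forall A B, cod (zero A B) = B;
  dom_add : forall f g, dom f = dom g -> cod f = cod g -> dom (add f g) = dom f;
  cod_add : forall f g, dom f = dom g -> cod f = cod g -> cod (add f g) = cod f;
  add_comm : forall f g, dom f = dom g -> cod f = cod g -> add f g = add g f;
  add_assoc : forall f g h, dom f = dom g -> cod f = cod g ->
    dom g = dom h -> cod g = cod h -> add (add f g) h = add f (add g h);
  add_zero : forall f, add f (zero (dom f) (cod f)) = f;
  comp_addr : forall f g h, cod f = dom g -> dom g = dom h -> cod g = cod h ->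
    comp f (add g h) = add (comp f g) (comp f h);
  comp_zeror : forall f C, comp f (zero (cod f) C) = zero (dom f) C;
  pi0_add : forall f g A B, dom f = dom g -> cod f = prod A B -> cod g = prod A B ->
    comp (add f g) (pi0 A B) = add (comp f (pi0 A B)) (comp g (pi0 A B));
  pi0_zero : forall C A B, comp (zero C (prod A B)) (pi0 A B) = zero C A;
  pi1_add : forall f g A B, dom f = dom g -> cod f = prod A B -> cod g = prod A B ->
    comp (add f g) (pi1 A B) = add (comp f (pi1 A B)) (comp g (pi1 A B));
  pi1_zero : forall C A B, comp (zero C (prod A B)) (pi1 A B) = zero C B
}.

Arguments dom {c} _. Arguments cod {c} _. Arguments idm {c} _.
Arguments comp {c} _ _. Arguments prod {c} _ _. Arguments pi0 {c} _ _.
Arguments pi1 {c} _ _. Arguments pair {c} _ _. Arguments bang {c} _.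
Arguments add {c} _ _. Arguments zero {c} _ _.

Section Seqs.
Variable X : clac.

Definition P (A : ob X) : ob X := prod A A.
Definition prodm (f g : mor X) : mor X :=
  pair (comp (pi0 (dom f) (dom g)) f) (comp (pi1 (dom f) (dom g)) g).
Definition Pm (f : mor X) : mor X := prodm f f.
Definition Pn (n : nat) (A : ob X) : ob X := Nat.iter n P A.
Definition Pnm (n : nat) (f : mor X) : mor X := Nat.iter n Pm f.

Definition unit0 (A : ob X) : mor X := pair (idm A) (zero A A).
Definition unit1 (A : ob X) : mor X := pair (zero A A) (idm A).
Definition sum_map (A : ob X) : mor X := prodm (idm A) (add (pi0 A A) (pi1 A A)).
Definition proj0_map (A : ob X) : mor X := prodm (idm A) (pi0 A A).
Definition proj1_map (A : ob X) : mor X := prodm (idm A) (pi1 A A).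
Definition ell (A : ob X) : mor X := prodm (unit0 A) (unit1 A).
Definition cmap (A : ob X) : mor X :=
  pair (pair (comp (pi0 (P A) (P A)) (pi0 A A)) (comp (pi1 (P A) (P A)) (pi0 A A)))
       (pair (comp (pi0 (P A) (P A)) (pi1 A A)) (comp (pi1 (P A) (P A)) (pi1 A A))).

Definition pseq : Type := nat -> mor X.
Definition seqeq (f g : pseq) : Prop := forall n, f n = g n.
Definition is_preDseq (A B : ob X) (f : pseq) : Prop :=
  forall n, dom (f n) = Pn n A /\ cod (f n) = B.
Definition lact (h : mor X) (f : pseq) : pseq := fun n => comp (Pnm n h) (f n).
Definition ract (f : pseq) (k : mor X) : pseq := fun n => comp (f n) k.
Definition Tseq (f : pseq) : pseq :=
  fun n => pair (comp (Pnm n (pi0 (dom (f 0)) (dom (f 0)))) (f n)) (f (S n)).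
Definition Dseq (f : pseq) : pseq := fun n => f (S n).
Definition Dnseq (k : nat) (f : pseq) : pseq := Nat.iter k Dseq f.
Fixpoint iseq (A : ob X) (n : nat) : mor X :=
  match n with
  | 0 => idm A
  | S k => comp (pi1 (Pn k A) (Pn k A)) (iseq A k)
  end.
Definition seqcomp (f g : pseq) : pseq := fun n => comp (Nat.iter n Tseq f 0) (g n).
Definition seqadd (f g : pseq) : pseq := fun n => add (f n) (g n).
Definition seqzero (A B : ob X) : pseq := fun n => zero (Pn n A) B.

Definition is_Dseq (A B : ob X) (f : pseq) : Prop :=
  is_preDseq A B f /\
  forall n,
    seqeq (lact (unit0 (Pn n A)) (Dnseq (S n) f)) (seqzero (Pn n A) B) /\
    seqeq (lact (sum_map (Pn n A)) (Dnseq (S n) f))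
          (seqadd (lact (proj0_map (Pn n A)) (Dnseq (S n) f))
                  (lact (proj1_map (Pn n A)) (Dnseq (S n) f))) /\
    seqeq (lact (ell (Pn n A)) (Dnseq (S (S n)) f)) (Dnseq (S n) f) /\
    seqeq (lact (cmap (Pn n A)) (Dnseq (S (S n)) f)) (Dnseq (S (S n)) f).

Record is_cdc (D : mor X -> mor X) : Prop := {
  cd_dom : forall f, dom (D f) = P (dom f);
  cd_cod : forall f, cod (D f) = cod f;
  cd1_add : forall f g, dom f = dom g -> cod f = cod g -> D (add f g) = add (D f) (D g);
  cd1_zero : forall A B, D (zero A B) = zero (P A) B;
  cd2_add : forall f, comp (sum_map (dom f)) (D f)
                      = add (comp (proj0_map (dom f)) (D f)) (comp (proj1_map (dom f)) (D f));
  cd2_zero : forall f, comp (unit0 (dom f)) (D f) = zero (dom f) (cod f);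
  cd3_id : forall A, D (idm A) = pi1 A A;
  cd3_pi0 : forall A B, D (pi0 A B) = comp (pi1 (prod A B) (prod A B)) (pi0 A B);
  cd3_pi1 : forall A B, D (pi1 A B) = comp (pi1 (prod A B) (prod A B)) (pi1 A B);
  cd4 : forall f g, dom f = dom g -> D (pair f g) = pair (D f) (D g);
  cd5 : forall f g, cod f = dom g ->
    D (comp f g) = comp (pair (comp (pi0 (dom f) (dom f)) f) (D f)) (D g);
  cd6 : forall f, comp (ell (dom f)) (D (D f)) = D f;
  cd7 : forall f, comp (cmap (dom f)) (D (D f)) = D (D f)
}.

Definition omegaD (D : mor X -> mor X) : mor X -> pseq := fun f n => Nat.iter n D f.
Definition Dom (wm : mor X -> pseq) : mor X -> mor X := fun f => wm f 1.

(* D-coalgebra structures (wo, wm) : X -> D[X], unfolded *)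
Record is_coalg (wo : ob X -> ob X) (wm : mor X -> pseq) : Prop := {
  w_Dseq : forall f, is_Dseq (wo (dom f)) (wo (cod f)) (wm f);
  w_id : forall A, seqeq (wm (idm A)) (iseq (wo A));
  w_comp : forall f g, cod f = dom g -> seqeq (wm (comp f g)) (seqcomp (wm f) (wm g));
  w_prod : forall A B, wo (prod A B) = prod (wo A) (wo B);
  w_term : wo (term X) = term X;
  w_pi0 : forall A B, seqeq (wm (pi0 A B)) (ract (iseq (prod (wo A) (wo B))) (pi0 (wo A) (wo B)));
  w_pi1 : forall A B, seqeq (wm (pi1 A B)) (ract (iseq (prod (wo A) (wo B))) (pi1 (wo A) (wo B)));
  w_add : forall f g, dom f = dom g -> cod f = cod g ->
    seqeq (wm (add f g)) (seqadd (wm f) (wm g));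
  w_zero : forall A B, seqeq (wm (zero A B)) (seqzero (wo A) (wo B));
  w_counit_ob : forall A, wo A = A;
  w_counit : forall f, wm f 0 = f;
  (* coassociativity  omega ; delta = omega ; D[omega] *)
  w_coassoc_ob : forall A, wo A = wo (wo A);
  w_coassoc : forall f n, seqeq (Dnseq n (wm f)) (wm (wm f n))
}.

End Seqs.

Arguments P {X} _. Arguments prodm {X} _ _. Arguments Pn {X} _ _.
Arguments Pnm {X} _ _.

Record is_sclac_functor (X Y : clac) (Fo : ob X -> ob Y) (Fm : mor X -> mor Y) : Prop := {
  F_dom : forall f, dom (Fm f) = Fo (dom f);
  F_cod : forall f, cod (Fm f) = Fo (cod f);
  F_id : forall A, Fm (idm A) = idm (Fo A);
  F_comp : forall f g, cod f = dom g -> Fm (comp f g) = comp (Fm f) (Fm g);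
  F_prod : forall A B, Fo (prod A B) = prod (Fo A) (Fo B);
  F_term : Fo (term X) = term Y;
  F_pi0 : forall A B, Fm (pi0 A B) = pi0 (Fo A) (Fo B);
  F_pi1 : forall A B, Fm (pi1 A B) = pi1 (Fo A) (Fo B);
  F_add : forall f g, dom f = dom g -> cod f = cod g -> Fm (add f g) = add (Fm f) (Fm g);
  F_zero : forall A B, Fm (zero A B) = zero (Fo A) (Fo B)
}.

Definition is_scdf (X Y : clac) (D : mor X -> mor X) (D' : mor Y -> mor Y)
    (Fo : ob X -> ob Y) (Fm : mor X -> mor Y) : Prop :=
  is_sclac_functor X Y Fo Fm /\ forall f, Fm (D f) = D' (Fm f).

Definition is_coalg_mor (X Y : clac)
    (wo : ob X -> ob X) (wm : mor X -> pseq X)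
    (wo' : ob Y -> ob Y) (wm' : mor Y -> pseq Y)
    (Fo : ob X -> ob Y) (Fm : mor X -> mor Y) : Prop :=
  is_sclac_functor X Y Fo Fm /\
  (forall A, wo' (Fo A) = Fo (wo A)) /\
  (forall f n, wm' (Fm f) n = Fm (wm f n)).

(* If D satisfies [CD.1]-[CD.7], then n |-> D^n[f] is a D-sequence: the maps <1,0>,
   1 x (pi0 + pi1), 1 x pi_j, l and c occurring in [DS.1]-[DS.4] are linear (D[h] = pi1 h),
   for linear h the chain rule iterates to D^n[h g] = P^n(h) D^n[g], so [DS.1]-[DS.4] at
   level n are the derivatives of [CD.2], [CD.6], [CD.7] at D^n[f]; functoriality of omega^D
   is the iterated chain rule D^n[f g] = T^n(f) D^n[g].  Conversely, coassociativity of a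
   coalgebra omega forces omega(f)_n = D^n[f] for D = omega(-)_1, and [CD.1]-[CD.7] are read
   off from omega being a strict Cartesian left additive functor into D-sequences ([CD.4]
   follows from [CD.3] and [CD.5] by pairing).  Both structures are thus the same sequence
   n |-> D^n[f], and a functor commutes with the coalgebra maps iff it commutes with D. *)

From Stdlib Require Import Arith Lia.

Section Structure.
Variable X : clac.

Lemma dom_prodm (f g : mor X) : dom (prodm f g) = prod (dom f) (dom g).
Proof.
  unfold prodm. rewrite dom_pair, dom_comp, dom_pi0; auto.
  - rewrite cod_pi0; reflexivity.
  - rewrite !dom_comp, dom_pi0, dom_pi1; rewrite ?cod_pi0, ?cod_pi1; reflexivity.
Qed.

Lemma cod_prodm (f g : mor X) : cod (prodm f g) = prod (cod f) (cod g).
Proof.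
  unfold prodm. rewrite cod_pair, !cod_comp; rewrite ?cod_pi0, ?cod_pi1; auto.
  rewrite !dom_comp, dom_pi0, dom_pi1; rewrite ?cod_pi0, ?cod_pi1; reflexivity.
Qed.

Lemma dom_Pnm n (f : mor X) : dom (Pnm n f) = Pn n (dom f).
Proof. induction n; simpl; auto. unfold Pm. rewrite dom_prodm, IHn. reflexivity. Qed.

Lemma cod_Pnm n (f : mor X) : cod (Pnm n f) = Pn n (cod f).
Proof. induction n; simpl; auto. unfold Pm. rewrite cod_prodm, IHn. reflexivity. Qed.

Lemma dom_iseq A n : dom (iseq X A n) = Pn n A.
Proof.
  induction n; simpl; [apply dom_idm|].
  rewrite dom_comp, dom_pi1; [reflexivity|]. rewrite cod_pi1; auto.
Qed.

Lemma cod_iseq A n : cod (iseq X A n) = A.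
Proof.
  induction n; simpl; [apply cod_idm|].
  rewrite cod_comp; auto. rewrite cod_pi1, dom_iseq. reflexivity.
Qed.

End Structure.

Ltac ty_step := first [
  progress unfold Pm
  | progress rewrite ?dom_idm, ?cod_idm, ?dom_pi0, ?cod_pi0, ?dom_pi1, ?cod_pi1,
    ?dom_zero, ?cod_zero, ?dom_prodm, ?cod_prodm, ?dom_Pnm, ?cod_Pnm,
    ?dom_iseq, ?cod_iseq
  | rewrite dom_comp by solve_ty
  | rewrite cod_comp by solve_ty
  | rewrite dom_pair by solve_ty
  | rewrite cod_pair by solve_ty
  | rewrite dom_add by solve_ty
  | rewrite cod_add by solve_ty ]
with solve_ty := solve [ repeat ty_step;
  first [ reflexivity | assumption | congruence | unfold P in *; congruence ] ].

Section Products.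
Variable X : clac.

Lemma comp_pair (h f g : mor X) : cod h = dom f -> dom f = dom g ->
  comp h (pair f g) = pair (comp h f) (comp h g).
Proof.
  intros Ehf Efg.
  rewrite <- (pair_eta _ (comp h (pair f g)) (cod f) (cod g)) by solve_ty.
  rewrite !comp_assoc, pair_pi0, pair_pi1 by solve_ty. reflexivity.
Qed.

Lemma prodm_pi1 (f g : mor X) :
  comp (prodm f g) (pi1 (cod f) (cod g)) = comp (pi1 (dom f) (dom g)) g.
Proof.
  unfold prodm.
  replace (cod f) with (cod (comp (pi0 (dom f) (dom g)) f)) by solve_ty.
  replace (cod g) with (cod (comp (pi1 (dom f) (dom g)) g)) at 1 by solve_ty.
  apply pair_pi1. solve_ty.
Qed.

Lemma pi1_idr (A B : ob X) : comp (pi1 A B) (idm B) = pi1 A B.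
Proof. rewrite <- (cod_pi1 X A B) at 2. apply comp_idr. Qed.

Lemma pair_pi1_comp (f g h : mor X) A B : dom f = dom g -> cod f = A -> cod g = B ->
  dom h = B -> comp (pair f g) (comp (pi1 A B) h) = comp g h.
Proof.
  intros Efg Ef Eg Eh. subst A B.
  rewrite <- comp_assoc, pair_pi1 by solve_ty. reflexivity.
Qed.

End Products.

Lemma Dnseq_shift (X : clac) k (s : pseq X) m : Dnseq X k s m = s (k + m).
Proof.
  revert m; induction k; intro m; simpl; auto.
  unfold Dseq. rewrite IHk. f_equal. lia.
Qed.

Lemma iter_comm_map {A B : Type} (F : A -> B) (d : A -> A) (d' : B -> B) :
  (forall a, F (d a) = d' (F a)) -> forall n a, F (Nat.iter n d a) = Nat.iter n d' (F a).
Proof. intros HF n a. induction n; simpl; [reflexivity|]. rewrite HF, IHn. reflexivity. Qed.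

Section Differential.
Variable X : clac.
Variable D : mor X -> mor X.
Hypothesis HD : is_cdc X D.

Definition linear (h : mor X) : Prop := D h = comp (pi1 (dom h) (dom h)) h.

Lemma D_comp_linear h k : linear h -> cod h = dom k -> D (comp h k) = comp (Pm X h) (D k).
Proof. intros Lh Ehk. rewrite (cd5 _ _ HD), Lh by exact Ehk. reflexivity. Qed.

Lemma linear_comp h k : linear h -> linear k -> cod h = dom k -> linear (comp h k).
Proof.
  intros Lh Lk Ehk. unfold linear.
  rewrite D_comp_linear, Lk by solve_ty. rewrite <- comp_assoc by solve_ty.
  unfold Pm. rewrite <- Ehk, prodm_pi1, dom_comp, comp_assoc by solve_ty. reflexivity.
Qed.

Lemma linear_pi0 A B : linear (pi0 A B).
Proof. unfold linear. rewrite (cd3_pi0 _ _ HD), dom_pi0. reflexivity. Qed.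

Lemma linear_pi1 A B : linear (pi1 A B).
Proof. unfold linear. rewrite (cd3_pi1 _ _ HD), dom_pi1. reflexivity. Qed.

Lemma linear_idm A : linear (idm A).
Proof. unfold linear. rewrite (cd3_id _ _ HD), dom_idm, pi1_idr. reflexivity. Qed.

Lemma linear_zero A B : linear (zero A B).
Proof.
  unfold linear. rewrite (cd1_zero _ _ HD), dom_zero.
  rewrite <- (cod_pi1 X A A) at 4. rewrite comp_zeror, dom_pi1. reflexivity.
Qed.

Lemma linear_pair f g : linear f -> linear g -> dom f = dom g -> linear (pair f g).
Proof.
  intros Lf Lg Efg. unfold linear.
  rewrite (cd4 _ _ HD), Lf, Lg, dom_pair, comp_pair, Efg by solve_ty. reflexivity.
Qed.

Lemma linear_add f g : linear f -> linear g -> dom f = dom g -> cod f = cod g ->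
  linear (add f g).
Proof.
  intros Lf Lg Ed Ec. unfold linear.
  rewrite (cd1_add _ _ HD), Lf, Lg, dom_add, comp_addr, Ed by solve_ty. reflexivity.
Qed.

Lemma linear_prodm f g : linear f -> linear g -> linear (prodm f g).
Proof.
  intros Lf Lg. unfold prodm.
  apply linear_pair; try apply linear_comp; auto using linear_pi0, linear_pi1; solve_ty.
Qed.

Lemma linear_Pnm n h : linear h -> linear (Pnm n h).
Proof. intro Lh. induction n; simpl; auto. apply linear_prodm; auto. Qed.

Lemma linear_iseq A n : linear (iseq X A n).
Proof.
  induction n; simpl; [apply linear_idm|].
  apply linear_comp; auto using linear_pi1. solve_ty.
Qed.

Lemma linear_unit0 A : linear (unit0 X A).
Proof. apply linear_pair; auto using linear_idm, linear_zero. solve_ty. Qed.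

Lemma linear_unit1 A : linear (unit1 X A).
Proof. apply linear_pair; auto using linear_idm, linear_zero. solve_ty. Qed.

Lemma linear_sum_map A : linear (sum_map X A).
Proof.
  apply linear_prodm; auto using linear_idm.
  apply linear_add; auto using linear_pi0, linear_pi1; solve_ty.
Qed.

Lemma linear_proj0_map A : linear (proj0_map X A).
Proof. apply linear_prodm; auto using linear_idm, linear_pi0. Qed.

Lemma linear_proj1_map A : linear (proj1_map X A).
Proof. apply linear_prodm; auto using linear_idm, linear_pi1. Qed.

Lemma linear_ell A : linear (ell X A).
Proof. apply linear_prodm; auto using linear_unit0, linear_unit1. Qed.

Lemma linear_cmap A : linear (cmap X A).
Proof.
  unfold cmap.
  repeat (apply linear_pair || apply linear_comp); auto using linear_pi0, linear_pi1; solve_ty.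
Qed.

Lemma dom_iter_D n f : dom (Nat.iter n D f) = Pn n (dom f).
Proof. induction n; simpl; auto. rewrite (cd_dom _ _ HD), IHn. reflexivity. Qed.

Lemma cod_iter_D n f : cod (Nat.iter n D f) = cod f.
Proof. induction n; simpl; auto. rewrite (cd_cod _ _ HD), IHn. reflexivity. Qed.

Lemma iter_D_zero n A B : Nat.iter n D (zero A B) = zero (Pn n A) B.
Proof. induction n; simpl; auto. rewrite IHn, (cd1_zero _ _ HD). reflexivity. Qed.

Lemma iter_D_add n f g : dom f = dom g -> cod f = cod g ->
  Nat.iter n D (add f g) = add (Nat.iter n D f) (Nat.iter n D g).
Proof.
  intros Ed Ec. induction n; simpl; auto.
  rewrite IHn, (cd1_add _ _ HD); rewrite ?dom_iter_D, ?cod_iter_D; congruence.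
Qed.

Lemma iter_D_pair n f g : dom f = dom g ->
  Nat.iter n D (pair f g) = pair (Nat.iter n D f) (Nat.iter n D g).
Proof.
  intros Ed. induction n; simpl; auto.
  rewrite IHn, (cd4 _ _ HD); rewrite ?dom_iter_D; congruence.
Qed.

Lemma iter_D_comp_linear n h k : linear h -> cod h = dom k ->
  Nat.iter n D (comp h k) = comp (Pnm n h) (Nat.iter n D k).
Proof.
  intros Lh Ehk. induction n; simpl; auto.
  rewrite IHn, D_comp_linear; auto using linear_Pnm.
  rewrite cod_Pnm, dom_iter_D, Ehk. reflexivity.
Qed.

Lemma iter_D_linear n h : linear h -> Nat.iter n D h = comp (iseq X (dom h) n) h.
Proof.
  intro Lh. induction n; simpl; [rewrite comp_idl; reflexivity|].
  assert (L : linear (comp (iseq X (dom h) n) h))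
    by (apply linear_comp; auto using linear_iseq; solve_ty).
  rewrite IHn, L, dom_comp, dom_iseq, comp_assoc by solve_ty. reflexivity.
Qed.

Definition tangent (f : mor X) : mor X := pair (comp (pi0 (dom f) (dom f)) f) (D f).

Lemma iter_D_comp n : forall f g, cod f = dom g ->
  Nat.iter n D (comp f g) = comp (Nat.iter n tangent f) (Nat.iter n D g).
Proof.
  induction n; intros f g Efg; [reflexivity|].
  rewrite !Nat.iter_succ_r, (cd5 _ _ HD) by exact Efg. fold (tangent f).
  apply IHn. unfold tangent. rewrite (cd_dom _ _ HD), cod_pair, (cd_cod _ _ HD);
    [|rewrite (cd_dom _ _ HD)]; solve_ty.
Qed.

Lemma Tseq_omegaD f m : Tseq X (omegaD X D f) m = Nat.iter m D (tangent f).
Proof.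
  unfold Tseq, omegaD, tangent. simpl.
  rewrite iter_D_pair, iter_D_comp_linear, <- (Nat.iter_succ_r m _ D f);
    auto using linear_pi0; [solve_ty|rewrite (cd_dom _ _ HD); solve_ty].
Qed.

Lemma iter_Tseq_omegaD n f m :
  Nat.iter n (Tseq X) (omegaD X D f) m = omegaD X D (Nat.iter n tangent f) m.
Proof.
  revert m; induction n; intro m; simpl; [reflexivity|].
  unfold Tseq at 1. rewrite !IHn. apply Tseq_omegaD.
Qed.

Lemma Dnseq_omegaD k f m : Dnseq X k (omegaD X D f) m = omegaD X D (Nat.iter k D f) m.
Proof. rewrite Dnseq_shift. unfold omegaD. rewrite Nat.add_comm, Nat.iter_add. reflexivity. Qed.

Lemma lact_Dnseq_omegaD h k f m : linear h -> cod h = Pn k (dom f) ->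
  lact X h (Dnseq X k (omegaD X D f)) m = Nat.iter m D (comp h (Nat.iter k D f)).
Proof.
  intros Lh Eh. unfold lact. rewrite Dnseq_omegaD. symmetry.
  apply iter_D_comp_linear; [assumption|]. rewrite dom_iter_D. exact Eh.
Qed.

Lemma omegaD_Dseq f : is_Dseq X (dom f) (cod f) (omegaD X D f).
Proof.
  split; [intro n; split; [apply dom_iter_D | apply cod_iter_D]|].
  intro n.
  split; [|split; [|split]]; intro m; unfold seqzero, seqadd;
    rewrite ?lact_Dnseq_omegaD, ?Dnseq_omegaD
      by (auto using linear_unit0, linear_sum_map, linear_proj0_map, linear_proj1_map,
            linear_ell, linear_cmap;
          unfold ell, cmap, sum_map, proj0_map, proj1_map, unit0, unit1; simpl; solve_ty);
    simpl; rewrite <- (dom_iter_D n f); try rewrite <- (cod_iter_D n f);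
    generalize (Nat.iter n D f); intro g.
  - rewrite (cd2_zero _ _ HD). apply iter_D_zero.
  - rewrite (cd2_add _ _ HD).
    assert (dDg : dom (D g) = P (dom g)) by apply (cd_dom _ _ HD).
    apply iter_D_add; unfold proj0_map, proj1_map; solve_ty.
  - rewrite (cd6 _ _ HD). reflexivity.
  - rewrite (cd7 _ _ HD). reflexivity.
Qed.

Lemma omegaD_coalg : is_coalg X (fun A => A) (omegaD X D).
Proof.
  split; try reflexivity.
  - apply omegaD_Dseq.
  - intros A n. unfold omegaD. induction n; simpl; [reflexivity|].
    rewrite IHn, (linear_iseq A n), dom_iseq. reflexivity.
  - intros f g Efg n. unfold seqcomp. rewrite iter_Tseq_omegaD.
    apply iter_D_comp; assumption.
  - intros A B n. unfold ract, omegaD.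
    rewrite iter_D_linear, dom_pi0 by apply linear_pi0. reflexivity.
  - intros A B n. unfold ract, omegaD.
    rewrite iter_D_linear, dom_pi1 by apply linear_pi1. reflexivity.
  - intros f g Ed Ec n. apply iter_D_add; assumption.
  - intros A B n. apply iter_D_zero.
  - intros f n m. apply Dnseq_omegaD.
Qed.

End Differential.

Section Coalgebra.
Variable X : clac.
Variables (wo : ob X -> ob X) (wm : mor X -> pseq X).
Hypothesis HW : is_coalg X wo wm.

Lemma dom_wm f n : dom (wm f n) = Pn n (dom f).
Proof.
  destruct (w_Dseq _ _ _ HW f) as [Hty _]. destruct (Hty n) as [Hdom _].
  rewrite Hdom, (w_counit_ob _ _ _ HW). reflexivity.
Qed.

Lemma cod_wm f n : cod (wm f n) = cod f.
Proof.
  destruct (w_Dseq _ _ _ HW f) as [Hty _]. destruct (Hty n) as [_ Hcod].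
  rewrite Hcod, (w_counit_ob _ _ _ HW). reflexivity.
Qed.

Lemma omegaD_Dom f n : omegaD X (Dom X wm) f n = wm f n.
Proof.
  unfold omegaD. induction n; simpl; [symmetry; apply (w_counit _ _ _ HW)|].
  rewrite IHn. unfold Dom. rewrite <- (w_coassoc _ _ _ HW f n 1), Dnseq_shift.
  f_equal. lia.
Qed.

Lemma Dom_idm A : Dom X wm (idm A) = pi1 A A.
Proof.
  unfold Dom. rewrite (w_id _ _ _ HW). simpl.
  rewrite (w_counit_ob _ _ _ HW). apply pi1_idr.
Qed.

Lemma Dom_pi0 A B : Dom X wm (pi0 A B) = comp (pi1 (prod A B) (prod A B)) (pi0 A B).
Proof.
  unfold Dom. rewrite (w_pi0 _ _ _ HW). unfold ract. simpl.
  rewrite !(w_counit_ob _ _ _ HW), pi1_idr. reflexivity.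
Qed.

Lemma Dom_pi1 A B : Dom X wm (pi1 A B) = comp (pi1 (prod A B) (prod A B)) (pi1 A B).
Proof.
  unfold Dom. rewrite (w_pi1 _ _ _ HW). unfold ract. simpl.
  rewrite !(w_counit_ob _ _ _ HW), pi1_idr. reflexivity.
Qed.

Lemma Dom_comp f g : cod f = dom g ->
  Dom X wm (comp f g) = comp (pair (comp (pi0 (dom f) (dom f)) f) (Dom X wm f)) (Dom X wm g).
Proof.
  intro Efg. unfold Dom. rewrite (w_comp _ _ _ HW) by exact Efg.
  unfold seqcomp, Tseq. simpl. rewrite (w_counit _ _ _ HW). reflexivity.
Qed.

Lemma Dom_comp_pi0 h A B : cod h = prod A B ->
  Dom X wm (comp h (pi0 A B)) = comp (Dom X wm h) (pi0 A B).
Proof.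
  intro Eh. assert (dh := dom_wm h 1). assert (ch := cod_wm h 1). simpl in dh.
  rewrite Dom_comp, Dom_pi0 by solve_ty.
  apply pair_pi1_comp; unfold Dom; solve_ty.
Qed.

Lemma Dom_comp_pi1 h A B : cod h = prod A B ->
  Dom X wm (comp h (pi1 A B)) = comp (Dom X wm h) (pi1 A B).
Proof.
  intro Eh. assert (dh := dom_wm h 1). assert (ch := cod_wm h 1). simpl in dh.
  rewrite Dom_comp, Dom_pi1 by solve_ty.
  apply pair_pi1_comp; unfold Dom; solve_ty.
Qed.

Lemma Dom_pair f g : dom f = dom g -> Dom X wm (pair f g) = pair (Dom X wm f) (Dom X wm g).
Proof.
  intro Efg. assert (Ec : cod (Dom X wm (pair f g)) = prod (cod f) (cod g))
    by (unfold Dom; rewrite cod_wm; solve_ty).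
  rewrite <- (pair_eta _ _ _ _ Ec), <- Dom_comp_pi0, <- Dom_comp_pi1 by solve_ty.
  rewrite pair_pi0, pair_pi1 by exact Efg. reflexivity.
Qed.

Lemma wm_Dseq_base f : let A := dom f in
  comp (unit0 X A) (wm f 1) = zero A (cod f) /\
  comp (sum_map X A) (wm f 1)
    = add (comp (proj0_map X A) (wm f 1)) (comp (proj1_map X A) (wm f 1)) /\
  comp (ell X A) (wm f 2) = wm f 1 /\
  comp (cmap X A) (wm f 2) = wm f 2.
Proof.
  destruct (w_Dseq _ _ _ HW f) as [_ Hax]. destruct (Hax 0) as [H0 [Hsum [Hell Hc]]].
  specialize (H0 0). specialize (Hsum 0). specialize (Hell 0). specialize (Hc 0).
  unfold lact, seqadd, seqzero, Dnseq, Dseq in *. simpl in *.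
  rewrite !(w_counit_ob _ _ _ HW) in *. auto.
Qed.

Lemma Dom_cdc : is_cdc X (Dom X wm).
Proof.
  assert (DD : forall f, Dom X wm (Dom X wm f) = wm f 2)
    by (intro f; rewrite <- omegaD_Dom; reflexivity).
  split; intros; rewrite ?DD; try apply wm_Dseq_base.
  - apply dom_wm.
  - apply cod_wm.
  - apply (w_add _ _ _ HW); assumption.
  - unfold Dom. rewrite (w_zero _ _ _ HW). unfold seqzero.
    rewrite !(w_counit_ob _ _ _ HW). reflexivity.
  - apply Dom_idm.
  - apply Dom_pi0.
  - apply Dom_pi1.
  - apply Dom_pair; assumption.
  - apply Dom_comp; assumption.
Qed.

End Coalgebra.

Lemma coalg_mor_omegaD_iff (X Y : clac) (D : mor X -> mor X) (D' : mor Y -> mor Y)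
    (Fo : ob X -> ob Y) (Fm : mor X -> mor Y) :
  is_coalg_mor X Y (fun A => A) (omegaD X D) (fun B => B) (omegaD Y D') Fo Fm
  <-> is_scdf X Y D D' Fo Fm.
Proof.
  split.
  - intros [HF [_ Hw]]. split; [exact HF|]. intro f. symmetry. exact (Hw f 1).
  - intros [HF HD]. split; [exact HF|]. split; [reflexivity|].
    intros f n. symmetry. apply iter_comm_map. exact HD.
Qed.

Lemma coalg_mor_iff_omegaD (X Y : clac) (wo : ob X -> ob X) (wm : mor X -> pseq X)
    (wo' : ob Y -> ob Y) (wm' : mor Y -> pseq Y) (Fo : ob X -> ob Y) (Fm : mor X -> mor Y) :
  is_coalg X wo wm -> is_coalg Y wo' wm' ->
  is_coalg_mor X Y wo wm wo' wm' Fo Fm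
  <-> is_coalg_mor X Y (fun A => A) (omegaD X (Dom X wm)) (fun B => B) (omegaD Y (Dom Y wm'))
        Fo Fm.
Proof.
  intros HW HW'. unfold is_coalg_mor.
  split; intros [HF [_ Hw]]; split; try exact HF; split.
  - reflexivity.
  - intros f n. rewrite (omegaD_Dom X wo wm HW), (omegaD_Dom Y wo' wm' HW'). apply Hw.
  - intro A. rewrite (w_counit_ob _ _ _ HW), (w_counit_ob _ _ _ HW'). reflexivity.
  - intros f n. rewrite <- (omegaD_Dom X wo wm HW), <- (omegaD_Dom Y wo' wm' HW'). apply Hw.
Qed.

Theorem theorem4p21 :
  (* a CDC (X, D) gives the coalgebra (X, omega^D) *)
  (forall (X : clac) (D : mor X -> mor X),
      is_cdc X D -> is_coalg X (fun A => A) (omegaD X D)) /\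
  (* a coalgebra (X, omega) gives the CDC (X, D^omega) *)
  (forall (X : clac) (wo : ob X -> ob X) (wm : mor X -> pseq X),
      is_coalg X wo wm -> is_cdc X (Dom X wm)) /\
  (* D^(omega^D) = D *)
  (forall (X : clac) (D : mor X -> mor X),
      is_cdc X D -> forall f, Dom X (omegaD X D) f = D f) /\
  (* omega^(D^omega) = omega *)
  (forall (X : clac) (wo : ob X -> ob X) (wm : mor X -> pseq X),
      is_coalg X wo wm ->
      (forall A, wo A = A) /\ (forall f n, omegaD X (Dom X wm) f n = wm f n)) /\
  (* morphisms: for CDCs, coalgebra morphisms = strict Cartesian differential functors *)
  (forall (X Y : clac) (D : mor X -> mor X) (D' : mor Y -> mor Y)
          (Fo : ob X -> ob Y) (Fm : mor X -> mor Y),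
      is_cdc X D -> is_cdc Y D' ->
      (is_coalg_mor X Y (fun A => A) (omegaD X D) (fun B => B) (omegaD Y D') Fo Fm
       <-> is_scdf X Y D D' Fo Fm)) /\
  (* morphisms: for coalgebras, coalgebra morphisms = strict Cartesian differential functors *)
  (forall (X Y : clac) (wo : ob X -> ob X) (wm : mor X -> pseq X)
          (wo' : ob Y -> ob Y) (wm' : mor Y -> pseq Y)
          (Fo : ob X -> ob Y) (Fm : mor X -> mor Y),
      is_coalg X wo wm -> is_coalg Y wo' wm' ->
      (is_coalg_mor X Y wo wm wo' wm' Fo Fm
       <-> is_scdf X Y (Dom X wm) (Dom Y wm') Fo Fm)).
Proof.
  split; [|split; [|split; [|split; [|split]]]].
  - exact omegaD_coalg.
  - exact Dom_cdc.
  - reflexivity.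
  - intros X wo wm HW. split.
    + exact (w_counit_ob _ _ _ HW).
    + exact (omegaD_Dom X wo wm HW).
  - intros. apply coalg_mor_omegaD_iff.
  - intros X Y wo wm wo' wm' Fo Fm HW HW'.
    rewrite (coalg_mor_iff_omegaD X Y wo wm wo' wm' Fo Fm HW HW').
    apply coalg_mor_omegaD_iff.
Qed.
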